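(* Let $P$ be an integer and $m\ge 0$ an integer. Consider the equation $$\sigma_2(n)-n^2=V_{2m}(P,-1)\,n+U_{2m}(P,-1)^2+1$$ in positive integers $n$. Then every solution $n$ with $n>\big(|V_{2m}(P,-1)|+U_{2m}(P,-1)^2+1\big)^3$ is of one of the following forms (so all solutions not of these forms lie in the finite, computable range $n\le(|V_{2m}(P,-1)|+U_{2m}(P,-1)^2+1)^3$): (1) $n=U_{2k}(P,-1)\,U_{2k+2m}(P,-1)$ for some integer $k\ge 0$, with $U_{2k}(P,-1)$ and $U_{2k+2m}(P,-1)$ both prime; (2) $n=U_{2k}(P,-1)\,U_{2m-2k}(P,-1)$ for some integer $k$ with $0\le k\le m$ and $m\ne 2k$, with $U_{2k}(P,-1)$ and $U_{2m-2k}(P,-1)$ both prime.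
   Context: For a positive integer $n$ and $k\ge 0$, $\sigma_k(n)=\sum_{d\mid n,\ d>0} d^k$. For integers $P,Q$, the Lucas sequences are defined for $j\ge 0$ by $U_0(P,Q)=0$, $U_1(P,Q)=1$, $U_j(P,Q)=P\,U_{j-1}(P,Q)-Q\,U_{j-2}(P,Q)$ for $j>1$, and $V_0(P,Q)=2$, $V_1(P,Q)=P$, $V_j(P,Q)=P\,V_{j-1}(P,Q)-Q\,V_{j-2}(P,Q)$ for $j>1$. *)

From mathcomp Require Import all_boot all_order all_algebra.
Set Implicit Arguments. Unset Strict Implicit. Unset Printing Implicit Defensive.
Import Order.TTheory GRing.Theory Num.Theory.
Local Open Scope ring_scope.

Definition sigma (k n : nat) : nat := (\sum_(d <- divisors n) d ^ k)%N.

Fixpoint lucasU_pair (P Q : int) (j : nat) : int * int :=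
  match j with
  | 0%N => (0, 1)
  | j'.+1 => let (a, b) := lucasU_pair P Q j' in (b, P * b - Q * a)
  end.
Definition lucasU (P Q : int) (j : nat) : int := (lucasU_pair P Q j).1.

Fixpoint lucasV_pair (P Q : int) (j : nat) : int * int :=
  match j with
  | 0%N => (2, P)
  | j'.+1 => let (a, b) := lucasV_pair P Q j' in (b, P * b - Q * a)
  end.
Definition lucasV (P Q : int) (j : nat) : int := (lucasV_pair P Q j).1.

Definition zprime (z : int) : bool := prime `|z|%N.

From mathcomp Require Import all_boot all_order all_algebra.
From mathcomp Require Import zify ring lra.
Set Implicit Arguments. Unset Strict Implicit. Unset Printing Implicit Defensive.
Import Order.TTheory GRing.Theory Num.Theory.
Local Open Scope ring_scope.

(* Put C := |V_2m| + U_2m^2 + 1. The equation says sigma_2(n) - n^2 - 1 = V_2m n + U_2m^2 < C n,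
   so every proper divisor r > 1 of n has r^2 < C n. For n > C^3 this leaves only n = p q with
   primes p < q, and then p^2 + q^2 = V_2m p q + U_2m^2. Completing the square in q gives
   w^2 - (P^2 + 4) p^2 = 4 for w = (2 q - V_2m p) / U_2m. The solutions of this Pell-type
   equation are (V_2k, U_2k), as the descent (s, t) -> (t, s - P t) on s^2 - P s t - t^2 = +-1
   shows, and the addition formulas for U and V then identify {p, q} with {U_2k, U_2k+2m}.
   For P < 0 replace P by -P: U_2k changes sign and V_2k does not. *)
Notation U P j := (lucasU P (-1) j).
Notation V P j := (lucasV P (-1) j).

Section LucasIdentities.
Variable P : int.

Lemma lucasU0 : U P 0 = 0. Proof. by []. Qed.
Lemma lucasU1 : U P 1 = 1. Proof. by []. Qed.

Lemma lucasUSS j : U P j.+2 = P * U P j.+1 + U P j.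
Proof. by rewrite /lucasU /=; case: lucasU_pair => a b /=; ring. Qed.

Lemma lucasVSS j : V P j.+2 = P * V P j.+1 + V P j.
Proof. by rewrite /lucasV /=; case: lucasV_pair => a b /=; ring. Qed.

Lemma lucasV_U j : V P j = 2 * U P j.+1 - P * U P j.
Proof.
elim/ltn_ind: j => -[|[|j]] IH; rewrite ?lucasUSS /lucasV /lucasU /=; try ring.
by rewrite -/(lucasV P (-1) j.+2) lucasVSS !IH // !lucasUSS; ring.
Qed.

Lemma lucasU_addS a b : U P (a + b).+1 = U P a.+1 * U P b.+1 + U P a * U P b.
Proof.
elim/ltn_ind: b => -[|[|b]] IH.
- by rewrite addn0 lucasU0 lucasU1; ring.
- by rewrite addn1 !lucasUSS lucasU0 lucasU1; ring.
have -> : (a + b.+2).+1 = (a + b.+1).+2 by rewrite !addnS.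
by rewrite lucasUSS IH // addnS IH // !lucasUSS; ring.
Qed.

Lemma lucasU_add a b : U P (a + b) = U P a * U P b.+1 + U P a.+1 * U P b - P * U P a * U P b.
Proof.
case: a => [|a]; first by rewrite lucasU0 lucasU1; ring.
by rewrite addSn lucasU_addS lucasUSS; ring.
Qed.

Lemma lucasU_cassini j : U P j.+1 ^+ 2 - P * U P j * U P j.+1 - U P j ^+ 2 = (-1) ^+ j.
Proof.
elim: j => [|j IH]; first by rewrite lucasU0 lucasU1; ring.
by rewrite [RHS]exprS -IH lucasUSS; ring.
Qed.

Lemma lucasV_sq j : V P j ^+ 2 - (P ^+ 2 + 4) * U P j ^+ 2 = 4 * (-1) ^+ j.
Proof. by rewrite -lucasU_cassini lucasV_U; ring. Qed.

Lemma lucasU_addV c e : 2 * U P (c + e) = U P c * V P e + U P e * V P c.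
Proof. by rewrite lucasU_add !lucasV_U; ring. Qed.

Lemma lucasU_subV c e : V P c * U P (c + e) - U P c * V P (c + e) = 2 * (-1) ^+ c * U P e.
Proof. by rewrite -lucasU_cassini !lucasV_U -addnS !lucasU_add lucasUSS; ring. Qed.

Lemma lucasU_ge0 j : 0 <= P -> 0 <= U P j.
Proof.
move=> P_ge0; elim/ltn_ind: j => -[|[|j]] IH //.
by rewrite lucasUSS addr_ge0 ?mulr_ge0 ?IH.
Qed.

End LucasIdentities.

Lemma lucasU_opp P j : U (- P) j = (-1) ^+ j.+1 * U P j.
Proof.
elim/ltn_ind: j => -[|[|j]] IH; rewrite ?lucasU0 ?lucasU1; try ring.
by rewrite !lucasUSS !IH // !exprS; ring.
Qed.

Lemma lucasU_opp_even P k : U (- P) (2 * k) = - U P (2 * k).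
Proof. by rewrite lucasU_opp exprS exprM sqrrN expr1n; ring. Qed.

Lemma lucasV_opp_even P k : V (- P) (2 * k) = V P (2 * k).
Proof. by rewrite !lucasV_U !lucasU_opp !exprS exprM sqrrN expr1n; ring. Qed.

Lemma lucasU0_even k : U 0 (2 * k) = 0.
Proof. by elim: k => [|k IH] //; rewrite mulnS lucasUSS mul0r add0r. Qed.

Section LucasDescent.
Variable P : int.
Hypothesis P_gt0 : 0 < P.

Lemma lucasU_consecutive (s t : int) : 0 < s -> 0 <= t ->
  `|s ^+ 2 - P * s * t - t ^+ 2| = 1 -> exists j, s = U P j.+1 /\ t = U P j.
Proof.
have [N] := ubnP (absz (s + t)); elim: N s t => // N IH s t st_lt s_gt0 t_ge0 form1.
have [t0|t_neq0] := eqVneq t 0.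
  rewrite {}t0 in form1 *; exists 0%N; rewrite lucasU0 lucasU1; split=> //.
  by move: form1; rewrite mulr0 expr0n !subr0 ger0_norm ?sqr_ge0; nia.
have Pt_le_s : P * t <= s.
  by rewrite leNgt; apply/negP => s_lt; move: form1; nia.
have [j [tE sE]] : exists j, t = U P j.+1 /\ s - P * t = U P j.
  apply: IH; [nia | lia | lia |].
  by rewrite -form1 -normrN; congr `|_|; ring.
by exists j.+1; rewrite lucasUSS -tE -sE; split=> //; ring.
Qed.

Lemma lucasU_even_consecutive (s t : int) : 0 < s -> 0 <= t ->
  s ^+ 2 - P * s * t - t ^+ 2 = 1 -> exists k, s = U P (2 * k).+1 /\ t = U P (2 * k).
Proof.
move=> s_gt0 t_ge0 form1.
have [j [sE tE]] := lucasU_consecutive s_gt0 t_ge0 ltac:(by rewrite form1 normr1).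
have j_even : ~~ odd j.
  apply/negP => j_odd; move: form1.
  by rewrite sE tE mulrAC lucasU_cassini -signr_odd j_odd expr1; lia.
have jE : j = (2 * j./2)%N by rewrite mulnC muln2 -{1}(odd_double_half j) (negbTE j_even).
by exists j./2; rewrite -jE.
Qed.

Lemma lucasV_of_pell4 (w y : int) : 0 <= w -> 0 <= y ->
  w ^+ 2 - (P ^+ 2 + 4) * y ^+ 2 = 4 -> exists k, w = V P (2 * k) /\ y = U P (2 * k).
Proof.
move=> w_ge0 y_ge0 pell4.
have /dvdzP[s sE] : (2 %| w + P * y)%Z.
  have : (w + P * y) ^+ 2 = (P ^+ 2 * y ^+ 2 + 2 * y ^+ 2 + 2 + w * P * y) * 2
                          + (w ^+ 2 - (P ^+ 2 + 4) * y ^+ 2 - 4) by ring.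
  rewrite pell4 subrr addr0 => sqE.
  have : (2 %| (w + P * y) ^+ 2)%Z by rewrite sqE dvdz_mull.
  by rewrite !dvdzE abszX Euclid_dvdX // andbT.
have form1 : s ^+ 2 - P * s * y - y ^+ 2 = 1.
  have wE : w = s * 2 - P * y by lia.
  have : 4 * (s ^+ 2 - P * s * y - y ^+ 2) = w ^+ 2 - (P ^+ 2 + 4) * y ^+ 2.
    by rewrite wE; ring.
  by rewrite pell4; lia.
have [k [sk yk]] := lucasU_even_consecutive (s := s) ltac:(nia) y_ge0 form1.
by exists k; rewrite lucasV_U -sk -yk; split=> //; lia.
Qed.

Lemma lucasU_of_quadratic m (x y : int) : 0 < x -> 0 < y -> U P (2 * m) != 0 ->
    x ^+ 2 + y ^+ 2 = V P (2 * m) * x * y + U P (2 * m) ^+ 2 ->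
  exists k, (x = U P (2 * k + 2 * m) /\ y = U P (2 * k))
         \/ (x = U P (2 * k) /\ y = U P (2 * k + 2 * m)).
Proof.
set u := U P (2 * m); set v := V P (2 * m) => x_gt0 y_gt0 u_neq0 quad.
have pell_v : v ^+ 2 - (P ^+ 2 + 4) * u ^+ 2 = 4.
  by rewrite lucasV_sq exprM sqrrN !expr1n mulr1.
have sqE : (2 * x - v * y) ^+ 2 = u ^+ 2 * (4 + (P ^+ 2 + 4) * y ^+ 2).
  have : (2 * x - v * y) ^+ 2 - u ^+ 2 * (4 + (P ^+ 2 + 4) * y ^+ 2)
       = 4 * (x ^+ 2 + y ^+ 2 - (v * x * y + u ^+ 2))
         + y ^+ 2 * (v ^+ 2 - (P ^+ 2 + 4) * u ^+ 2 - 4) by ring.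
  by rewrite quad pell_v !subrr !mulr0 addr0 => /subr0_eq.
have /dvdzP[w wE] : (u %| 2 * x - v * y)%Z.
  by rewrite -(dvdz_pexp2r _ _ (isT : 0 < 2)%N) sqE dvdz_mulr.
have w_sq : w ^+ 2 = 4 + (P ^+ 2 + 4) * y ^+ 2.
  by apply: (mulIf (expf_neq0 2 u_neq0)); rewrite -exprMn -wE sqE mulrC.
have pell_w : `|w| ^+ 2 - (P ^+ 2 + 4) * y ^+ 2 = 4.
  by rewrite real_normK ?num_real // w_sq addrK.
have [a [wa ya]] := lucasV_of_pell4 (normr_ge0 w) (ltW y_gt0) pell_w.
have [w_ge0 | w_lt0] := lerP 0 w.
  exists a; left; split=> //.
  have := lucasU_addV P (2 * a) (2 * m).
  by rewrite -/u -/v -wa -ya ger0_norm //; lia.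
have wN : w = - V P (2 * a) by rewrite -wa ltr0_norm ?opprK.
rewrite {}wN in wE.
have [m_le_a | a_lt_m] := leqP m a.
  have aE : (2 * a = 2 * m + 2 * (a - m))%N by rewrite -mulnDr subnKC.
  exists (a - m)%N; right; split; last by rewrite addnC -aE.
  have := lucasU_subV P (2 * m) (2 * (a - m)).
  by rewrite -aE -/u -/v -ya exprM sqrrN !expr1n mulr1; lia.
have mE : (2 * m = 2 * a + 2 * (m - a))%N by rewrite -mulnDr subnKC // ltnW.
have := lucasU_subV P (2 * a) (2 * (m - a)).
have := lucasU_ge0 (2 * (m - a)) (ltW P_gt0).
by rewrite -mE -/u -/v -ya exprM sqrrN !expr1n mulr1; lia.
Qed.

End LucasDescent.

Local Open Scope nat_scope.

Lemma divisorsE n (s : seq nat) : 0 < n -> sorted ltn s ->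
  (forall d, (d %| n) = (d \in s)) -> divisors n = s.
Proof.
move=> n_gt0 s_sorted dvd_s; apply: (irr_sorted_eq ltn_trans ltnn) => //.
  exact: sorted_divisors_ltn.
by move=> d; rewrite -dvdn_divisors.
Qed.

Lemma sigma2_prime p : prime p -> sigma 2 p = 1 + p ^ 2.
Proof.
move=> p_pr; have /primeP[p_gt1 dvd_p] := p_pr.
rewrite /sigma (@divisorsE p [:: 1; p]) ?big_cons ?big_nil ?addn0 ?prime_gt0 //=.
  by rewrite p_gt1.
move=> d; rewrite !inE; apply/idP/idP => [/dvd_p // | /orP[] /eqP ->].
  exact: dvd1n.
exact: dvdnn.
Qed.

Lemma sigma2_prime_sq p : prime p -> sigma 2 (p * p) = 1 + p ^ 2 + (p * p) ^ 2.
Proof.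
move=> p_pr; have p_gt1 := prime_gt1 p_pr.
rewrite /sigma (@divisorsE (p * p) [:: 1; p; p * p]) ?big_cons ?big_nil ?addn0 ?addnA //=.
- by rewrite muln_gt0 prime_gt0.
- by rewrite p_gt1 ltn_Pmull ?prime_gt0.
move=> d; rewrite !inE mulnn; apply/idP/idP.
  by case/(dvdn_pfactor _ _ p_pr) => -[|[|[|k]]] // _ ->; rewrite eqxx ?orbT.
by move=> /or3P[] /eqP ->; rewrite ?dvd1n ?dvdn_exp2l // (dvdn_exp2l _ (isT : 1 <= 2)).
Qed.

Lemma sigma2_mul_primes p q : prime p -> prime q -> p < q ->
  sigma 2 (p * q) = 1 + p ^ 2 + q ^ 2 + (p * q) ^ 2.
Proof.
move=> p_pr q_pr p_lt_q; have /primeP[q_gt1 dvd_q] := q_pr.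
have p_gt1 := prime_gt1 p_pr.
rewrite /sigma (@divisorsE (p * q) [:: 1; p; q; p * q]) ?big_cons ?big_nil ?addn0 ?addnA //=.
- by rewrite muln_gt0 !prime_gt0.
- by rewrite p_gt1 p_lt_q ltn_Pmull ?prime_gt0.
move=> d; rewrite !inE; apply/idP/idP => [| /or4P[] /eqP ->].
- have [/dvdnP[e ->] | p_ndvd] := boolP (p %| d).
    rewrite mulnC dvdn_pmul2l ?prime_gt0 // => /dvd_q /orP[] /eqP ->.
      by rewrite muln1 eqxx orbT.
    by rewrite eqxx !orbT.
  rewrite Gauss_dvdr; last by rewrite coprime_sym prime_coprime.
  move=> /dvd_q /orP[] /eqP ->.
    by rewrite eqxx.
  by rewrite eqxx !orbT.
- exact: dvd1n.
- exact: dvdn_mulr.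
- exact: dvdn_mull.
- exact: dvdnn.
Qed.

Lemma sigma2_ge_proper_divisor n r : r %| n -> 1 < r < n -> 1 + r ^ 2 + n ^ 2 <= sigma 2 n.
Proof.
move=> r_dvd /andP[r_gt1 r_lt_n]; have n_gt0 : 0 < n by rewrite (ltn_trans _ r_lt_n) // ltnW.
have -> : 1 + r ^ 2 + n ^ 2 = \sum_(d <- [:: 1; r; n]) d ^ 2.
  by rewrite !big_cons big_nil addn0 addnA.
apply: (uniq_sub_le_big leqnn (fun x y => leq_addr y x)).
- by rewrite /= !inE; lia.
- exact: divisors_uniq.
move=> d; rewrite !inE -dvdn_divisors // => /or3P[] /eqP ->; rewrite ?dvd1n ?dvdnn //.
Qed.

Local Open Scope ring_scope.

Section LargeSolutions.
Variables (v u : int) (n : nat).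
Hypothesis n_gt0 : (0 < n)%N.
Hypothesis sigma_eq : (sigma 2 n)%:Z - (n ^ 2)%:Z = v * n%:Z + u ^+ 2 + 1.
Hypothesis n_large : (`|v| + u ^+ 2 + 1) ^+ 3 < n%:Z.
(* All that is used of the Lucas sequences here: V_2m^2 - (P^2 + 4) U_2m^2 = 4. *)
Hypothesis u0_v2 : u = 0 -> `|v| = 2.

Local Notation C := (`|v| + u ^+ 2 + 1).

Lemma C_lt_n : C < n%:Z.
Proof.
have C_ge1 : 1 <= C by rewrite lerDr addr_ge0 ?sqr_ge0.
by apply: le_lt_trans n_large; nia.
Qed.

Lemma proper_divisor_sq_lt r : (r %| n)%N -> (1 < r < n)%N -> r%:Z ^+ 2 < C * n%:Z.
Proof.
move=> r_dvd r_range; have := sigma2_ge_proper_divisor r_dvd r_range.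
have : v * n%:Z <= `|v| * n%:Z by rewrite ler_wpM2r ?ler_norm.
have : u ^+ 2 <= u ^+ 2 * n%:Z by rewrite ler_peMr ?sqr_ge0 // lez_nat.
by move: sigma_eq; lia.
Qed.

Lemma multiple_of_n_eq e : v * n%:Z + u ^+ 2 = e * n%:Z -> u = 0 /\ v = e.
Proof.
move=> eq_e; have u_sq_lt : u ^+ 2 < n%:Z.
  by have := C_lt_n; have := normr_ge0 v; lia.
have u_sq : u ^+ 2 = (e - v) * n%:Z by rewrite mulrBl -eq_e; ring.
have ev0 : e - v = 0.
  by move: u_sq u_sq_lt (sqr_ge0 u) n_gt0; nia.
by move: u_sq; rewrite ev0 mul0r => /eqP; rewrite sqrf_eq0 => /eqP; split=> //; lia.
Qed.

Lemma not_prime_large : ~~ prime n.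
Proof.
apply/negP => n_pr; have [u0 v0] : u = 0 /\ v = 0.
  by apply: multiple_of_n_eq; move: sigma_eq; rewrite sigma2_prime //; lia.
by have := u0_v2 u0; rewrite v0.
Qed.

Lemma not_prime_sq_large p : prime p -> n != (p * p)%N.
Proof.
move=> p_pr; apply/negP => /eqP nE; have [u0 v1] : u = 0 /\ v = 1.
  by apply: multiple_of_n_eq; move: sigma_eq; rewrite nE sigma2_prime_sq //; nia.
by have := u0_v2 u0; rewrite v1.
Qed.

Lemma n_gt1 : (1 < n)%N.
Proof. by have := C_lt_n; have := normr_ge0 v; have := sqr_ge0 u; lia. Qed.

Lemma cofactor_pdiv_prime : prime (n %/ pdiv n)%N.
Proof.
set p := pdiv n; set r := (n %/ p)%N.
have p_pr : prime p := pdiv_prime n_gt1; have p_gt1 := prime_gt1 p_pr.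
have nE : n = (p * r)%N by rewrite mulnC divnK // pdiv_dvd.
have r_dvd : (r %| n)%N by rewrite nE dvdn_mull.
have r_gt1 : (1 < r)%N.
  rewrite ltn_neqAle lt0n; apply/andP; split.
    by apply: contra not_prime_large; rewrite nE eq_sym => /eqP ->; rewrite muln1.
  by apply: contraTneq n_gt0 => r0; rewrite nE r0 muln0.
have r_lt_n : (r < n)%N by rewrite nE ltn_Pmull // ltnW.
apply: contraT => r_npr.
have p_sq_le_r : (p ^ 2 <= r)%N.
  have p_le : (p <= pdiv r)%N.
    exact: pdiv_min_dvd (prime_gt1 (pdiv_prime r_gt1)) (dvdn_trans (pdiv_dvd r) r_dvd).
  apply: leq_trans (_ : pdiv r ^ 2 <= r)%N; first by rewrite leq_exp2r.
  by rewrite leqNgt; apply: contra r_npr; apply: ltn_pdiv2_prime; rewrite ltnW.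
have r_gt0 : 0 < r%:Z by rewrite ltz_nat ltnW.
have p_gt0 : 0 < p%:Z by rewrite ltz_nat prime_gt0.
have r_lt : r%:Z < C * p%:Z.
  by rewrite -(ltr_pM2r r_gt0) -expr2 -mulrA -PoszM -nE proper_divisor_sq_lt // r_gt1.
have p_lt : p%:Z < C.
  rewrite -(ltr_pM2r p_gt0); apply: le_lt_trans r_lt.
  by rewrite -PoszM lez_nat mulnn.
have n_lt : n%:Z < C * (p%:Z * p%:Z) by rewrite nE PoszM mulrCA ltr_pM2l.
have C3_ge : C * (p%:Z * p%:Z) <= C ^+ 3.
  by rewrite (exprSr _ 2) mulrC ler_wpM2r ?expr2 ?ler_pM ?ltW // (lt_trans p_gt0).
by have := le_lt_trans C3_ge (lt_trans n_large n_lt); rewrite ltxx.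
Qed.

Lemma large_solution_semiprime : exists p q : nat,
  [/\ prime p, prime q, (p < q)%N, n = (p * q)%N
    & p%:Z ^+ 2 + q%:Z ^+ 2 = v * p%:Z * q%:Z + u ^+ 2].
Proof.
set p := pdiv n; set q := (n %/ p)%N; have q_pr : prime q := cofactor_pdiv_prime.
have p_pr : prime p := pdiv_prime n_gt1.
have nE : n = (p * q)%N by rewrite mulnC divnK // pdiv_dvd.
have p_le_q : (p <= q)%N.
  by apply: pdiv_min_dvd; [exact: prime_gt1 | rewrite nE dvdn_mull].
have p_neq_q : p != q.
  by apply: contra (not_prime_sq_large p_pr) => /eqP qE; rewrite nE -qE.
have p_lt_q : (p < q)%N by rewrite ltn_neqAle p_neq_q.
exists p, q; split=> //.
by move: sigma_eq; rewrite nE sigma2_mul_primes //; nia.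
Qed.

Lemma large_solution_u_neq0 : u != 0.
Proof.
have [p [q [_ _ p_lt_q _ quad]]] := large_solution_semiprime.
have [u0 | //] := eqVneq u 0; have := u0_v2 u0; rewrite u0 expr0n addr0 in quad.
by move: quad; nia.
Qed.

End LargeSolutions.

Lemma lucas_large_solution_nonneg P m n : 0 <= P -> (0 < n)%N ->
    (sigma 2 n)%:Z - (n ^ 2)%:Z = V P (2 * m) * n%:Z + U P (2 * m) ^+ 2 + 1 ->
    (`|V P (2 * m)| + U P (2 * m) ^+ 2 + 1) ^+ 3 < n%:Z ->
  exists k, [/\ n%:Z = U P (2 * k) * U P (2 * k + 2 * m),
                zprime (U P (2 * k)) & zprime (U P (2 * k + 2 * m))].
Proof.
move=> P_ge0 n_gt0 sigma_eq n_large.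
have u0_v2 : U P (2 * m) = 0 -> `|V P (2 * m)| = 2.
  move=> u0; apply/eqP; rewrite -(eqrXn2 (_ : 0 < 2)%N) ?normr_ge0 // real_normK ?num_real //.
  by have := lucasV_sq P (2 * m); rewrite u0 exprM sqrrN !expr1n expr0n mulr0 subr0 mulr1 => ->.
have [p [q [p_pr q_pr _ nE quad]]] := large_solution_semiprime n_gt0 sigma_eq n_large u0_v2.
have u_neq0 := large_solution_u_neq0 n_gt0 sigma_eq n_large u0_v2.
have P_gt0 : 0 < P.
  by rewrite lt_def P_ge0 andbT; apply: contra_neq u_neq0 => ->; rewrite lucasU0_even.
have [k [[qE pE] | [qE pE]]] := lucasU_of_quadratic P_gt0 (x := q%:Z) (y := p%:Z)
  ltac:(by rewrite ltz_nat prime_gt0) ltac:(by rewrite ltz_nat prime_gt0) u_neq0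
  ltac:(by rewrite addrC quad; ring).
- by exists k; rewrite /zprime -qE -pE !absz_nat nE PoszM.
- by exists k; rewrite /zprime -qE -pE !absz_nat nE PoszM mulrC.
Qed.

Theorem theorem1p4 (P : int) (m n : nat) :
  (0 < n)%N ->
  (sigma 2 n)%:Z - (n ^ 2)%:Z
    = lucasV P (-1) (2 * m) * n%:Z + (lucasU P (-1) (2 * m)) ^+ 2 + 1 ->
  (`|lucasV P (-1) (2 * m)| + (lucasU P (-1) (2 * m)) ^+ 2 + 1) ^+ 3 < n%:Z ->
  (exists k : nat,
      n%:Z = lucasU P (-1) (2 * k) * lucasU P (-1) (2 * k + 2 * m)
      /\ zprime (lucasU P (-1) (2 * k)) /\ zprime (lucasU P (-1) (2 * k + 2 * m)))
  \/
  (exists k : nat,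
      (k <= m)%N /\ m <> (2 * k)%N /\
      n%:Z = lucasU P (-1) (2 * k) * lucasU P (-1) (2 * m - 2 * k)
      /\ zprime (lucasU P (-1) (2 * k)) /\ zprime (lucasU P (-1) (2 * m - 2 * k))).
Proof.
move=> n_gt0 sigma_eq n_large; left.
have [P_ge0 | P_lt0] := lerP 0 P.
  by have [k [? ? ?]] := lucas_large_solution_nonneg P_ge0 n_gt0 sigma_eq n_large; exists k.
have [k []] := lucas_large_solution_nonneg (P := - P) (m := m) ltac:(by rewrite oppr_ge0 ltW) n_gt0
  ltac:(by rewrite lucasV_opp_even lucasU_opp_even sqrrN)
  ltac:(by rewrite lucasV_opp_even lucasU_opp_even sqrrN).
rewrite -mulnDr !lucasU_opp_even /zprime !abszN mulrNN => nE pk_pr pkm_pr.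
by exists k; rewrite -mulnDr.
Qed.
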